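(* Let $\mathcal{P}$ be a poset with at least two elements having the Unique Cover Twin Property, let $n\ge 3$, and let $\mathcal{F}$ be an induced-$\mathcal{P}$-saturated family in $\mathcal{B}_n$. If there exist distinct $x,y\in[n]$ such that no $F\in\mathcal{F}$ satisfies $|F\cap\{x,y\}|=1$, then $F\cap\{x,y\}=\emptyset$ for all $F\in\mathcal{F}$.
   Context: In a poset $(P,\le)$, $y$ covers $x$ if $x<y$ and there is no $z$ with $x<z<y$. A poset $\mathcal{P}=(P,\le)$ has the Unique Cover Twin Property (UCTP) if for every $S\in P$ that has exactly one cover $T\in P$, there exists $S'\in P$ with $S'\ne S$ such that $T$ also covers $S'$. $\mathcal{B}_n$ denotes the Boolean lattice $(2^{[n]},\subseteq)$. A family $\mathcal{F}\subseteq 2^{[n]}$ (ordered by inclusion) is induced-$\mathcal{P}$-saturated if it contains no induced copy of $\mathcal{P}$ (an injection $f$ with $u\le v\iff f(u)\subseteq f(v)$) but every family $\mathcal{F}'$ with $\mathcal{F}\subsetneq\mathcal{F}'\subseteq 2^{[n]}$ contains one. *)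

From mathcomp Require Import all_boot all_order.
Set Implicit Arguments. Unset Strict Implicit. Unset Printing Implicit Defensive.
Import Order.Theory.
Local Open Scope order_scope.

Definition covers (d : Order.disp_t) (P : finPOrderType d) (x y : P) : bool :=
  (x < y) && [forall z : P, ~~ ((x < z) && (z < y))].

Definition UCTP (d : Order.disp_t) (P : finPOrderType d) : Prop :=
  forall S T : P,
    covers S T -> (forall T' : P, covers S T' -> T' = T) ->
    exists S' : P, S' != S /\ covers S' T.

Definition contains_induced (d : Order.disp_t) (P : finPOrderType d) (n : nat)
    (F : {set {set 'I_n}}) : Prop :=
  exists f : P -> {set 'I_n},
    [/\ injective f, (forall u, f u \in F) &
        (forall u v : P, (u <= v) <-> (f u \subset f v))].

Definition induced_saturated (d : Order.disp_t) (P : finPOrderType d) (n : nat)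
    (F : {set {set 'I_n}}) : Prop :=
  ~ contains_induced P F /\
  (forall F' : {set {set 'I_n}}, F \proper F' -> contains_induced P F').

(** Suppose some member of F contains both x and y, and let A be a smallest
    one.  Since no member of F separates x from y, the set G := A \ {y} is not
    in F, yet it sits exactly where A does relative to every other member of F:
    a member contains G iff it contains A, and a member other than A lies below
    A iff it lies below G (it misses y by minimality).  By saturation, F u {G}
    contains an induced copy of P, which must use G at some element u0.  If A
    is not used by the copy, replacing G by A yields a copy inside F.  If A is
    the image of t, then t is the unique cover of u0, and a twin S' of u0 below
    t would map strictly below A, hence below G, i.e. S' < u0 < t: this
    violates the Unique Cover Twin Property. *)

From mathcomp Require Import all_boot all_order.

Set Implicit Arguments.
Unset Strict Implicit.
Unset Printing Implicit Defensive.

Import Order.Theory.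

Lemma card_setI_set2 (T : finType) (B : {set T}) (x y : T) :
  x != y -> #|B :&: [set x; y]| = (x \in B) + (y \in B).
Proof.
move=> xy.
case xB: (x \in B); case yB: (y \in B).
- by rewrite (setIidPr _) ?cards2 ?xy // subUset !sub1set xB yB.
- suff -> : B :&: [set x; y] = [set x] by rewrite cards1.
  apply/setP => z; rewrite !inE; case: (eqVneq z x) => [->|_]; first by rewrite xB.
  by case: (eqVneq z y) => [->|_]; rewrite ?yB ?andbF.
- suff -> : B :&: [set x; y] = [set y] by rewrite cards1.
  apply/setP => z; rewrite !inE; case: (eqVneq z y) => [->|_]; first by rewrite yB orbT.
  by case: (eqVneq z x) => [->|_]; rewrite ?xB ?andbF.
- suff -> : B :&: [set x; y] = set0 by rewrite cards0.
  apply/setP => z; rewrite !inE; case: (eqVneq z x) => [->|_]; first by rewrite xB.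
  by case: (eqVneq z y) => [->|_]; rewrite ?yB ?andbF.
Qed.

Section OrderEmbedding.

Local Open Scope order_scope.

Lemma subset_mono_inj d (P : porderType d) (T : finType) (f : P -> {set T}) :
  {mono f : u v / u <= v >-> u \subset v} -> injective f.
Proof. by apply: mono_inj => [A|]; [exact: subxx | exact: le_anti]. Qed.

Variables (d : Order.disp_t) (P : finPOrderType d).

Lemma contains_inducedP n (F : {set {set 'I_n}}) :
  contains_induced P F <->
  exists f : P -> {set 'I_n},
    {mono f : u v / u <= v >-> u \subset v} /\ forall u, f u \in F.
Proof.
split=> [[f [_ fF fmono]]|[f [fmono fF]]].
  by exists f; split=> // u v; apply/idP/idP => /fmono.
exists f; split=> // [|u v]; last by rewrite fmono.
exact: subset_mono_inj fmono.
Qed.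

Lemma saturation_embedding n (F : {set {set 'I_n}}) (G : {set 'I_n}) :
  ~ contains_induced P F -> contains_induced P (G |: F) ->
  exists f : P -> {set 'I_n}, exists u0 : P,
    [/\ {mono f : u v / u <= v >-> u \subset v}, f u0 = G &
        forall v, v != u0 -> f v \in F].
Proof.
move=> noF /contains_inducedP [f [fmono fGF]].
have f_inj := subset_mono_inj fmono.
have [u0 /eqP fu0 | notG] := pickP (fun u => f u == G); last first.
  case: noF; apply/contains_inducedP; exists f; split=> // u.
  by have := fGF u; rewrite in_setU1 notG.
exists f, u0; split=> // v vu0.
by have := fGF v; rewrite in_setU1 -fu0 (inj_eq f_inj) (negbTE vu0).
Qed.

Variables (T : finType) (f : P -> {set T}) (u0 : P) (A : {set T}).
Hypothesis f_mono : {mono f : u v / u <= v >-> u \subset v}.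
Hypothesis up_swap : forall v, v != u0 -> (A \subset f v) = (f u0 \subset f v).
Hypothesis down_swap :
  forall v, v != u0 -> f v != A -> (f v \subset A) = (f v \subset f u0).

Let f_inj : injective f := subset_mono_inj f_mono.

Lemma swap_embedding :
  (forall v, f v != A) ->
  {mono (fun v => if v == u0 then A else f v) : u v / u <= v >-> u \subset v}.
Proof.
move=> notA u v /=.
case: (eqVneq u u0) => [->|uu0]; case: (eqVneq v u0) => [->|vu0].
- by rewrite subxx lexx.
- by rewrite up_swap // f_mono.
- by rewrite down_swap ?notA // f_mono.
- exact: f_mono.
Qed.

Lemma swap_target_unique_cover t :
  f u0 \proper A -> f t = A -> ~ UCTP P.
Proof.
move=> u0A ft; have tu0 : t != u0 by apply: contraTneq u0A => <-; rewrite ft properxx.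
have up_t v : v != u0 -> (u0 <= v) = (t <= v).
  by move=> vu0; rewrite -!f_mono ft up_swap.
have u0t : u0 < t by rewrite lt_neqAle eq_sym tu0 -f_mono ft proper_sub.
have cover_t : covers u0 t.
  rewrite /covers u0t; apply/forallP => z; apply/negP => /andP [u0z zt].
  have zu0 : z != u0 by rewrite eq_sym lt_eqF.
  by have := lt_geF zt; rewrite -up_t // (ltW u0z).
move=> uctp; have [|S' [S'u0 /andP [S't /forallP S'cover]]] := uctp _ _ cover_t.
  move=> T' /andP [u0T' /forallP T'cover].
  have T'u0 : T' != u0 by rewrite eq_sym lt_eqF.
  have : t <= T' by rewrite -up_t // ltW.
  rewrite le_eqVlt => /predU1P [//|tT']; have := T'cover t.
  by rewrite u0t tT'.
have fS'A : f S' != A by rewrite -ft (inj_eq f_inj) lt_eqF.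
have S'_le_u0 : S' <= u0 by rewrite -f_mono -down_swap // -ft f_mono ltW.
by have := S'cover u0; rewrite lt_neqAle S'u0 S'_le_u0 u0t.
Qed.

End OrderEmbedding.

Section SaturatedPair.

Variables (d : Order.disp_t) (P : finPOrderType d) (n : nat).
Variables (F : {set {set 'I_n}}) (x y : 'I_n).
Hypothesis xy : x != y.
Hypothesis F_pair : forall B, B \in F -> (x \in B) = (y \in B).

Section MinimalMember.

Variable A : {set 'I_n}.
Hypotheses (AF : A \in F) (yA : y \in A).
Hypothesis A_min : forall B, B \in F -> y \in B -> #|A| <= #|B|.

Let xAD1 : x \in A :\ y.
Proof. by rewrite !inE xy (F_pair AF). Qed.

Lemma setD1_notin_pair_family : A :\ y \notin F.
Proof. by apply/negP => /F_pair; rewrite xAD1 !inE eqxx. Qed.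

Lemma setD1_sub_pair_member B : B \in F -> (A :\ y \subset B) = (A \subset B).
Proof.
move=> BF; apply/idP/idP => [AD1B|]; last exact/subset_trans/subD1set.
have yB : y \in B by rewrite -(F_pair BF) (subsetP AD1B).
by rewrite -(setD1K yA) subUset sub1set yB.
Qed.

Lemma sub_setD1_pair_member B :
  B \in F -> B != A -> (B \subset A) = (B \subset A :\ y).
Proof.
move=> BF BA; rewrite subsetD1; case yB: (y \in B); rewrite ?andbT //= andbF.
by apply: contraNF BA => BsubA; rewrite eqEcard BsubA A_min.
Qed.

Lemma minimal_pair_member_unsaturated : UCTP P -> ~ induced_saturated P F.
Proof.
move=> uctp [noF satF].
have F_proper : F \proper A :\ y |: F.
  by apply: properUr; rewrite sub1set setD1_notin_pair_family.
have [f [u0 [f_mono fu0 fF]]] := saturation_embedding noF (satF _ F_proper).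
have up_swap v : v != u0 -> (A \subset f v) = (f u0 \subset f v).
  by move=> vu0; rewrite fu0 setD1_sub_pair_member ?fF.
have down_swap v : v != u0 -> f v != A -> (f v \subset A) = (f v \subset f u0).
  by move=> vu0; rewrite fu0; apply: sub_setD1_pair_member; rewrite fF.
have u0A : f u0 \proper A by rewrite fu0 properD1.
have [t /eqP ft | notA] := pickP (fun v => f v == A).
  exact: (swap_target_unique_cover f_mono up_swap down_swap u0A ft uctp).
apply: noF; apply/contains_inducedP.
exists (fun v => if v == u0 then A else f v); split.
  by apply: swap_embedding f_mono up_swap down_swap _ => v; rewrite notA.
by move=> v; case: eqP => [_|/eqP]; [exact: AF | exact: fF].
Qed.

End MinimalMember.

Lemma saturated_pair_family_avoids :
  UCTP P -> induced_saturated P F -> forall B, B \in F -> y \notin B.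
Proof.
move=> uctp satF B BF; apply/negP => yB.
have BFy : (B \in F) && (y \in B) by rewrite BF yB.
have [A /andP [AF yA] A_min] :=
  @arg_minnP _ B (fun C => (C \in F) && (y \in C)) (fun C => #|C|) BFy.
apply: (minimal_pair_member_unsaturated AF yA _ uctp satF) => C CF yC.
by apply: A_min; rewrite CF yC.
Qed.

End SaturatedPair.

Theorem lemma3p7 (d : Order.disp_t) (P : finPOrderType d) (n : nat)
    (F : {set {set 'I_n}}) (x y : 'I_n) :
  1 < #|P| -> UCTP P -> 3 <= n -> induced_saturated P F ->
  x != y ->
  (forall A, A \in F -> #|A :&: [set x; y]| != 1) ->
  forall A, A \in F -> A :&: [set x; y] = set0.
Proof.
move=> _ uctp _ satF xy F_no_split.
have F_pair B : B \in F -> (x \in B) = (y \in B).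
  move/F_no_split; rewrite card_setI_set2 //.
  by case: (x \in B); case: (y \in B).
move=> A AF; have yA := saturated_pair_family_avoids xy F_pair uctp satF AF.
by apply: cards0_eq; rewrite card_setI_set2 // (F_pair _ AF) (negbTE yA).
Qed.
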